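(* Let $M$ be a finitely generated monoid and let $G$ be a finite group. Then the direct product $M\times G$ is quasi-isometric to $M$.
   Context: For a monoid $S$ generated by a finite set $A$, $d_A(x,y)=\inf\{|w|:w\in A^*,\ xw=y\}$ ($A^*$ the free monoid on $A$, $\inf\emptyset=\infty$). A map $f:(S,d_A)\to(T,d_B)$ is a quasi-isometry if there are $1\le\lambda<\infty$, $0<\epsilon<\infty$, $0\le\mu<\infty$ with $\frac1\lambda d_A(x,y)-\epsilon\le d_B(f(x),f(y))\le\lambda d_A(x,y)+\epsilon$ for all $x,y$, and for each $t\in T$ some $x\in S$ with $\max(d_B(t,f(x)),d_B(f(x),t))\le\mu$. Finitely generated monoids $S,T$ are quasi-isometric if $(S,d_A)$ and $(T,d_B)$ are quasi-isometric for some finite generating sets $A,B$. *)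

From HB Require Import structures.
From mathcomp Require Import all_boot all_order all_algebra all_fingroup.
From mathcomp Require Import all_classical all_reals ereal Rstruct.
From Stdlib Require Import Rdefinitions.
From Stdlib Require List.

Set Implicit Arguments.
Unset Strict Implicit.
Unset Printing Implicit Defensive.

Import Order.TTheory GRing.Theory Num.Theory.
Local Open Scope ring_scope.
Local Open Scope classical_set_scope.
Local Open Scope ereal_scope.

Record monoid := Monoid {
  mcarrier :> Type;
  mmul : mcarrier -> mcarrier -> mcarrier;
  mone : mcarrier;
  mmulA : forall x y z, mmul x (mmul y z) = mmul (mmul x y) z;
  mmul1m : forall x, mmul mone x = x;
  mmulm1 : forall x, mmul x mone = x }.

Section Product.
Variables (M : monoid) (gT : finGroupType).

Definition pmul (x y : M * gT) : M * gT := (mmul x.1 y.1, (x.2 * y.2)%g).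
Definition pone : M * gT := (mone M, 1%g).

Lemma pmulA x y z : pmul x (pmul y z) = pmul (pmul x y) z.
Proof. by rewrite /pmul /= mmulA mulgA. Qed.
Lemma pmul1m x : pmul pone x = x.
Proof. by case: x => a b; rewrite /pmul /= mmul1m mul1g. Qed.
Lemma pmulm1 x : pmul x pone = x.
Proof. by case: x => a b; rewrite /pmul /= mmulm1 mulg1. Qed.

Definition prod_monoid : monoid := Monoid pmulA pmul1m pmulm1.
End Product.

Definition eval_word (M : monoid) (w : seq M) : M := foldr (@mmul M) (mone M) w.

Definition word_over (M : monoid) (A : seq M) (w : seq M) : Prop :=
  List.Forall (fun a => List.In a A) w.

Definition generates (M : monoid) (A : seq M) : Prop :=
  forall x : M, exists w, word_over A w /\ x = eval_word w.

Definition finitely_generated (M : monoid) : Prop :=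
  exists A : seq M, generates A.

(* d_A(x,y) = inf { |w| : w in A^*, x w = y }, with inf of empty set = +oo. *)
Definition dist (M : monoid) (A : seq M) (x y : M) : \bar R :=
  ereal_inf [set ((size w)%:R)%:E | w in
               [set w | word_over A w /\ mmul x (eval_word w) = y]].

Definition quasi_isometry (S T : monoid) (A : seq S) (B : seq T) (f : S -> T)
  : Prop :=
  exists (lam eps mu : R),
    [/\ (1 <= lam)%R, (0 < eps)%R, (0 <= mu)%R,
        (forall x y : S,
           (lam^-1)%:E * dist A x y - eps%:E <= dist B (f x) (f y)
           /\ dist B (f x) (f y) <= lam%:E * dist A x y + eps%:E)
      & (forall t : T, exists x : S,
           maxe (dist B t (f x)) (dist B (f x) t) <= mu%:E)].

Definition quasi_isometric (S T : monoid) : Prop :=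
  exists (A : seq S) (B : seq T), generates A /\ generates B /\
    exists f : S -> T, quasi_isometry A B f.

From mathcomp Require Import all_boot all_fingroup.
From mathcomp Require Import all_order all_algebra all_classical all_reals ereal Rstruct.
From Stdlib Require List.

(* Take the generators [1 :: A] of [M] and, for [M * G], their images
   [(a, 1)] together with all [(1, g)]; the letter [1] is added so that every
   product generator projects to a generator.  The projection [fst] is then
   1-Lipschitz, since a word over the product generators projects to a word
   of the same length; conversely a path from [x] to [y] in [M] lifts to a
   path from [(x, g)] to [(y, h)] after one extra letter [(1, g^-1 h)]. *)

Set Implicit Arguments.
Unset Strict Implicit.
Import Order.TTheory GRing.Theory Num.Theory.

Local Open Scope ereal_scope.

Lemma eval_word_cat (M : monoid) (s t : seq M) :
  eval_word (s ++ t) = mmul (eval_word s) (eval_word t).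
Proof.
elim: s => [|a s IH] /=; first by rewrite mmul1m.
by rewrite /eval_word /= -/(eval_word _) IH mmulA.
Qed.

Lemma dist_le_size (M : monoid) (A : seq M) x y w :
  word_over A w -> mmul x (eval_word w) = y -> dist A x y <= (size w)%:R%:E.
Proof. by move=> hw he; apply: ge_ereal_inf; exists (size w)%:R%:E => //; exists w. Qed.

Lemma dist_refl_le0 (M : monoid) (A : seq M) x : dist A x x <= 0.
Proof. by have := @dist_le_size M A x x [::] (List.Forall_nil _) (mmulm1 x). Qed.

Lemma dist_le_transfer (S T : monoid) (A : seq S) (B : seq T) x y x' y' k :
  (forall w, word_over A w -> mmul x (eval_word w) = y ->
     exists2 w', word_over B w' /\ mmul x' (eval_word w') = y' &
                 (size w' <= size w + k)%N) ->
  dist B x' y' <= dist A x y + k%:R%:E.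
Proof.
move=> transfer; rewrite -leeBlDr //.
apply/ereal_infP => _ [w [hw he] <-].
have [w' [hw' he'] hsize] := transfer w hw he.
rewrite leeBlDr //; apply: le_trans (dist_le_size hw' he') _.
by rewrite -EFinD lee_fin -natrD ler_nat.
Qed.

Lemma word_over_cat (M : monoid) (A s t : seq M) :
  word_over A s -> word_over A t -> word_over A (s ++ t).
Proof. by move=> hs ht; apply/List.Forall_app. Qed.

Lemma word_over_map (S T : monoid) (A : seq S) (B : seq T) (f : S -> T) w :
  (forall a, List.In a A -> List.In (f a) B) ->
  word_over A w -> word_over B (map f w).
Proof. by move=> fAB; elim=> [|a s ha _ IH] /=; constructor; auto. Qed.

Lemma eval_word_map (S T : monoid) (f : S -> T) :
  f (mone S) = mone T -> (forall a b, f (mmul a b) = mmul (f a) (f b)) ->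
  forall w, eval_word (map f w) = f (eval_word w).
Proof.
move=> f1 fM; elim=> [|a s IH] //=.
by rewrite /eval_word /= -/(eval_word _) -/(eval_word (map f s)) IH fM.
Qed.

Lemma List_In_cat (T : Type) (x : T) s t :
  List.In x (s ++ t) <-> List.In x s \/ List.In x t.
Proof. exact: List.in_app_iff. Qed.

Lemma List_In_map (T U : Type) (f : T -> U) y s :
  List.In y (map f s) <-> exists2 x, f x = y & List.In x s.
Proof.
split=> [/List.in_map_iff [x []]|[x <- hx]]; first by exists x.
by apply/List.in_map_iff; exists x.
Qed.

Lemma List_In_mem (T : eqType) (x : T) s : x \in s -> List.In x s.
Proof. by elim: s => [|a s IH] //=; rewrite inE => /orP [/eqP ->|/IH]; auto. Qed.

Section ProductGenerators.
Variables (M : monoid) (gT : finGroupType) (A : seq M).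
Hypothesis genA : generates A.

Local Notation P := (prod_monoid M gT).

Let B : seq M := mone M :: A.
Let lift1 (a : M) : P := (a, 1%g).
Let unit_at (g : gT) : P := (mone M, g).
Definition prod_gens : seq P := map lift1 B ++ map unit_at (enum gT).

Lemma generates_cons1 : generates B.
Proof.
move=> x; have [w [hw ->]] := genA x; exists w; split=> //.
by apply: List.Forall_impl hw => a ha; right.
Qed.

Lemma word_over_lift1 w : word_over B w -> word_over prod_gens (map lift1 w).
Proof.
by apply: word_over_map => a ha; apply/List_In_cat; left; apply/List_In_map; exists a.
Qed.

Lemma eval_word_lift1 w : eval_word (map lift1 w) = lift1 (eval_word w).
Proof. by apply: eval_word_map => // a b; rewrite /lift1 /= /pmul /= mulg1. Qed.

Lemma word_over_unit_at g : word_over prod_gens [:: unit_at g].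
Proof.
constructor; last constructor.
apply/List_In_cat; right; apply/List_In_map; exists g => //.
by apply: List_In_mem; rewrite mem_enum.
Qed.

Lemma word_over_fst w : word_over prod_gens w -> word_over B (map fst w).
Proof.
apply: word_over_map => _ /List_In_cat [] /List_In_map [b <- hb] //=.
by left.
Qed.

Lemma eval_word_fst (w : seq P) : eval_word (map fst w) = (eval_word w).1.
Proof. exact: (@eval_word_map P M fst). Qed.

Lemma lift_path w x y g h : mmul x (eval_word w) = y ->
  pmul (x, g) (eval_word (map lift1 w ++ [:: unit_at (g^-1 * h)%g])) = (y, h).
Proof.
move=> <-; rewrite eval_word_cat eval_word_lift1 /eval_word /= /pmul /=.
by rewrite mmul1m mmulm1 mul1g mulg1 mulgA mulgV mul1g.
Qed.

Lemma generates_prod : generates prod_gens.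
Proof.
move=> [x g]; have [w [hw ->]] := generates_cons1 x.
exists (map lift1 w ++ [:: unit_at g]); split.
  exact: word_over_cat (word_over_lift1 hw) (word_over_unit_at g).
by rewrite eval_word_cat eval_word_lift1 /eval_word /= /pmul /= !mmulm1 mul1g mulg1.
Qed.

Lemma dist_fst_le x y g h : dist B x y <= dist prod_gens (x, g) (y, h).
Proof.
rewrite -[dist prod_gens _ _]adde0.
apply: (dist_le_transfer (k := 0)) => w hw he; exists (map fst w).
  by split; [exact: word_over_fst | rewrite eval_word_fst; case: he].
by rewrite size_map addn0.
Qed.

Lemma dist_prod_le x y g h : dist prod_gens (x, g) (y, h) <= dist B x y + 1.
Proof.
apply: (dist_le_transfer (k := 1)) => w hw he.
exists (map lift1 w ++ [:: unit_at (g^-1 * h)%g]).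
  by split; [exact: word_over_cat (word_over_lift1 hw) (word_over_unit_at _)
            | exact: lift_path].
by rewrite size_cat size_map addn1.
Qed.

Lemma quasi_isometry_fst : quasi_isometry prod_gens B fst.
Proof.
exists 1%R, 1%R, 0%R; split.
- exact: RIneq.Rle_refl.
- exact: RIneq.Rlt_0_1.
- exact: RIneq.Rle_refl.
- move=> [x g] [y h] /=; rewrite invr1 !mul1e; split.
    by rewrite EFinN leeBlDr //; exact: dist_prod_le.
  by apply: le_trans (dist_fst_le x y g h) _; rewrite leeDl // lee_fin.
- by move=> t; exists (t, 1%g); rewrite maxxx; exact: dist_refl_le0.
Qed.

End ProductGenerators.

Theorem corollary8p4 (M : monoid) (gT : finGroupType) :
  finitely_generated M -> quasi_isometric (prod_monoid M gT) M.
Proof.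
move=> [A genA].
exists (prod_gens gT A), (mone M :: A); split; first exact: generates_prod.
split; first exact: generates_cons1.
by exists fst; exact: quasi_isometry_fst.
Qed.
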